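(* Let $\Gamma''$ be a congruence subgroup of $\operatorname{Mp}_2(\mathbb{Z})$, let $f$ be a harmonic Maass form of weight $k$ and $g$ a harmonic Maass form of weight $l$ for $\Gamma''$. For every non-negative integer $j$, \[ (-4\pi)^jL[f,g]_j=\binom{l+j-1}{j}(R_k^jf)(Lg)+(-1)^j\binom{k+j-1}{j}(Lf)(R_l^jg). \]
   Context: $\tau=u+iv\in\mathbb{H}$. $R_k=2i\partial_\tau+kv^{-1}$, $L=L_k=-2iv^2\partial_{\bar\tau}$ (independent of $k$), $R_k^j=R_{k+2(j-1)}\circ\cdots\circ R_k$. The weight $k$ Laplacian is $\Delta_k=-v^2(\partial_u^2+\partial_v^2)+ikv(\partial_u+i\partial_v)$. A harmonic Maass form of weight $k$ for $\Gamma''$ is a smooth $f:\mathbb{H}\to\mathbb{C}$ invariant under the weight $k$ slash action of $\Gamma''$, with $\Delta_kf=0$ and at most exponential growth at the cusps. The $j$-th Rankin–Cohen bracket of $f$ (weight $k$) and $g$ (weight $l$) is $[f,g]_j=\sum_{s=0}^j(-1)^s\binom{k+j-1}{s}\binom{l+j-1}{j-s}f^{(j-s)}g^{(s)}$, where $f^{(s)}=(2\pi i)^{-s}\partial_\tau^sf$ and $\binom{x}{s}=x(x-1)\cdots(x-s+1)/s!$ for real $x$. *)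

From Stdlib Require Import Reals ZArith.
From Coquelicot Require Export Coquelicot.
Open Scope R_scope.

Definition upper (tau : C) : Prop := 0 < Im tau.

Definition du (f : C -> C) : C -> C := fun tau =>
  (Derive (fun t => Re (f (t, Im tau))) (Re tau),
   Derive (fun t => Im (f (t, Im tau))) (Re tau)).
Definition dv (f : C -> C) : C -> C := fun tau =>
  (Derive (fun t => Re (f (Re tau, t))) (Im tau),
   Derive (fun t => Im (f (Re tau, t))) (Im tau)).

Definition dtau (f : C -> C) : C -> C := fun tau =>
  (/ 2 * (du f tau - Ci * dv f tau))%C.
Definition dtaubar (f : C -> C) : C -> C := fun tau =>
  (/ 2 * (du f tau + Ci * dv f tau))%C.

Fixpoint dword (w : list bool) (f : C -> C) : C -> C :=
  match w with
  | nil => f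
  | cons true w' => du (dword w' f)
  | cons false w' => dv (dword w' f)
  end.

Definition smooth_on_H (f : C -> C) : Prop :=
  forall (w : list bool) (tau : C), upper tau ->
    ex_derive (fun t => Re (dword w f (t, Im tau))) (Re tau) /\
    ex_derive (fun t => Im (dword w f (t, Im tau))) (Re tau) /\
    ex_derive (fun t => Re (dword w f (Re tau, t))) (Im tau) /\
    ex_derive (fun t => Im (dword w f (Re tau, t))) (Im tau) /\
    continuous (dword w f) tau.

Definition Rop (k : R) (f : C -> C) : C -> C := fun tau =>
  (2 * Ci * dtau f tau + RtoC (k / Im tau) * f tau)%C.
Definition Lop (f : C -> C) : C -> C := fun tau =>
  (- (2 * Ci) * RtoC (Im tau ^ 2) * dtaubar f tau)%C.

(** R_k^j = R_{k+2(j-1)} o ... o R_k. *)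
Fixpoint Rit (k : R) (j : nat) (f : C -> C) : C -> C :=
  match j with
  | O => f
  | S j' => Rit (k + 2) j' (Rop k f)
  end.

Definition Lap (k : R) (f : C -> C) : C -> C := fun tau =>
  (- RtoC (Im tau ^ 2) * (du (du f) tau + dv (dv f) tau)
   + Ci * RtoC (k * Im tau) * (du f tau + Ci * dv f tau))%C.

Fixpoint falling (x : R) (s : nat) : R :=
  match s with
  | O => 1
  | S s' => falling x s' * (x - INR s')
  end.
Definition gbinom (x : R) (s : nat) : R := falling x s / INR (fact s).

Definition dnorm (s : nat) (f : C -> C) : C -> C := fun tau =>
  (/ Cpow (RtoC (2 * PI) * Ci) s * Nat.iter s dtau f tau)%C.

Definition RCbracket (k l : R) (j : nat) (f g : C -> C) : C -> C := fun tau =>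
  sum_n (fun s : nat =>
    (RtoC ((-1) ^ s * gbinom (k + INR j - 1) s * gbinom (l + INR j - 1) (j - s))
       * dnorm (j - s) f tau * dnorm s g tau)%C) j.

(** An element is a pair (gamma, phi) with gamma = (a b; c d) in SL_2(Z) and
    phi a holomorphic function on H with phi(tau)^2 = c tau + d. *)
Record mp2 := Mp2 { mp_a : Z; mp_b : Z; mp_c : Z; mp_d : Z; mp_phi : C -> C }.

Definition in_Mp2 (x : mp2) : Prop :=
  (mp_a x * mp_d x - mp_b x * mp_c x = 1)%Z /\
  forall tau, upper tau ->
    ex_derive (K := C_AbsRing) (V := C_NormedModule) (mp_phi x) tau /\
    (mp_phi x tau * mp_phi x tau = RtoC (IZR (mp_c x)) * tau + RtoC (IZR (mp_d x)))%C.

Definition mact (x : mp2) (tau : C) : C :=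
  ((RtoC (IZR (mp_a x)) * tau + RtoC (IZR (mp_b x))) /
   (RtoC (IZR (mp_c x)) * tau + RtoC (IZR (mp_d x))))%C.

Definition mp_mul (x y : mp2) : mp2 :=
  Mp2 (mp_a x * mp_a y + mp_b x * mp_c y)%Z (mp_a x * mp_b y + mp_b x * mp_d y)%Z
      (mp_c x * mp_a y + mp_d x * mp_c y)%Z (mp_c x * mp_b y + mp_d x * mp_d y)%Z
      (fun tau => (mp_phi x (mact y tau) * mp_phi y tau)%C).
Definition mp_one : mp2 := Mp2 1 0 0 1 (fun _ => RtoC 1).
Definition mp_inv (x : mp2) : mp2 :=
  let y := Mp2 (mp_d x) (- mp_b x) (- mp_c x) (mp_a x) (fun _ => RtoC 1) in
  Mp2 (mp_d x) (- mp_b x) (- mp_c x) (mp_a x) (fun tau => (/ mp_phi x (mact y tau))%C).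

(** Two elements are equal in Mp_2(Z) when the matrices agree and the
    functions agree on H (elements are functions on H). *)
Definition mp_eq (x y : mp2) : Prop :=
  mp_a x = mp_a y /\ mp_b x = mp_b y /\ mp_c x = mp_c y /\ mp_d x = mp_d y /\
  forall tau, upper tau -> mp_phi x tau = mp_phi y tau.

Definition subgroup_Mp2 (G : mp2 -> Prop) : Prop :=
  (forall x, G x -> in_Mp2 x) /\
  (forall x y, G x -> in_Mp2 y -> mp_eq x y -> G y) /\
  G mp_one /\
  (forall x y, G x -> G y -> G (mp_mul x y)) /\
  (forall x, G x -> G (mp_inv x)).

Definition congruence_subgroup_Mp2 (G : mp2 -> Prop) : Prop :=
  subgroup_Mp2 G /\
  exists N : Z, (1 <= N)%Z /\
    forall a b c d : Z, (a * d - b * c = 1)%Z ->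
      (N | a - 1)%Z -> (N | b)%Z -> (N | c)%Z -> (N | d - 1)%Z ->
      exists x, G x /\ mp_a x = a /\ mp_b x = b /\ mp_c x = c /\ mp_d x = d.

Definition Cpowz (z : C) (m : Z) : C :=
  match m with
  | Z0 => RtoC 1
  | Zpos p => Cpow z (Pos.to_nat p)
  | Zneg p => (/ Cpow z (Pos.to_nat p))%C
  end.

(** Weight k slash action, k = m/2 half-integral: (f|_k (gamma,phi))(tau) = phi(tau)^{-2k} f(gamma tau). *)
Definition slash (m : Z) (f : C -> C) (x : mp2) : C -> C := fun tau =>
  (Cpowz (mp_phi x tau) (- m) * f (mact x tau))%C.

Definition harmonic_Maass (G : mp2 -> Prop) (k : R) (f : C -> C) : Prop :=
  smooth_on_H f /\
  (exists m : Z, IZR m = 2 * k /\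
     (forall x, G x -> forall tau, upper tau -> slash m f x tau = f tau) /\
     (* at most exponential growth at all cusps *)
     (forall sigma, in_Mp2 sigma -> exists Cc M : R, forall tau, 1 <= Im tau ->
        Cmod (slash m f sigma tau) <= M * exp (Cc * Im tau))) /\
  (forall tau, upper tau -> Lap k f tau = RtoC 0).

From Stdlib Require Import Reals Factorial Lra Lia List.
From Coquelicot Require Import Coquelicot.
Open Scope R_scope.

(* The lowering operator L = -2i v^2 d/dtaubar is a derivation, so L[f,g]_j is a
   combination of the products L(f^(j-s)) g^(s) and f^(j-s) L(g^(s)).  For f harmonic of
   weight k one has d/dtau (L f) = (i/2) Delta_k f + i(k-2)/(2v) L f = i(k-2)/(2v) L f, and
   since d/dtau and d/dtaubar commute, induction on n gives L(f^(n)) = (-k)_n (-4 pi v)^(-n) L f,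
   where (x)_n is the falling factorial.  Independently, induction on j expands
   R_k^j f = sum_m binom(j,m) (k+j-1)_(j-m) (-4 pi)^m v^(m-j) f^(m).  Matching the two sides
   term by term leaves binom(x+j-1,s) (-x)_n = (-1)^n binom(x+j-1,j) binom(j,s) n! for j = s+n. *)

(** * Falling factorials and binomial coefficients *)

Lemma INR_fact_neq_0 n : INR (fact n) <> 0.
Proof. apply not_0_INR, fact_neq_0. Qed.

Lemma falling_S_l x n : falling x (S n) = x * falling (x - 1) n.
Proof.
  revert x; induction n as [|n IH]; intros x; [simpl; ring|].
  change (falling x (S (S n))) with (falling x (S n) * (x - INR (S n))).
  rewrite IH; simpl falling; rewrite S_INR; ring.
Qed.

Lemma falling_add x a b : falling x (a + b) = falling x a * falling (x - INR a) b.
Proof.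
  induction b as [|b IH]; [rewrite Nat.add_0_r; simpl; ring|].
  rewrite Nat.add_succ_r; simpl falling; rewrite IH, plus_INR; ring.
Qed.

Lemma falling_INR_self n : falling (INR n) n = INR (fact n).
Proof.
  induction n as [|n IH]; [reflexivity|].
  rewrite falling_S_l, S_INR; replace (INR n + 1 - 1) with (INR n) by ring.
  rewrite IH; change (fact (S n)) with (S n * fact n)%nat; rewrite mult_INR, S_INR; ring.
Qed.

Lemma falling_INR_add n m : falling (INR (n + m)) n * INR (fact m) = INR (fact (n + m)).
Proof.
  rewrite <- (falling_INR_self (n + m)), falling_add, plus_INR.
  replace (INR n + INR m - INR n) with (INR m) by ring; rewrite falling_INR_self; reflexivity.
Qed.

Lemma falling_opp x n : falling (- x) n = (-1) ^ n * falling (x + INR n - 1) n.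
Proof.
  induction n as [|n IH]; [simpl; ring|].
  change (falling (- x) (S n)) with (falling (- x) n * (- x - INR n)).
  rewrite IH, (falling_S_l (x + INR (S n) - 1)), S_INR.
  replace (x + (INR n + 1) - 1 - 1) with (x + INR n - 1) by ring; simpl pow; ring.
Qed.

Lemma gbinom_0 x : gbinom x 0 = 1.
Proof. unfold gbinom; simpl; field. Qed.

Lemma gbinom_S x m : gbinom x (S m) = gbinom x m * (x - INR m) / INR (S m).
Proof.
  unfold gbinom; simpl falling; change (fact (S m)) with (S m * fact m)%nat; rewrite mult_INR.
  field; split; [apply INR_fact_neq_0 | apply not_0_INR; lia].
Qed.

Lemma gbinom_succ_S x m : gbinom (x + 1) (S m) = (x + 1) / INR (S m) * gbinom x m.
Proof.
  unfold gbinom; rewrite falling_S_l; replace (x + 1 - 1) with x by ring.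
  change (fact (S m)) with (S m * fact m)%nat; rewrite mult_INR.
  field; split; [apply INR_fact_neq_0 | apply not_0_INR; lia].
Qed.

Lemma gbinom_falling_opp x s n :
  gbinom (x + INR (s + n) - 1) s * falling (- x) n =
  (-1) ^ n * gbinom (x + INR (s + n) - 1) (s + n) * gbinom (INR (s + n)) s * INR (fact n).
Proof.
  unfold gbinom; rewrite falling_opp, falling_add, <- (falling_INR_add s n).
  replace (x + INR (s + n) - 1 - INR s) with (x + INR n - 1) by (rewrite plus_INR; ring).
  assert (Hs : falling (INR (s + n)) s <> 0).
  { intros E; apply (INR_fact_neq_0 (s + n)); rewrite <- falling_INR_add, E; ring. }
  field; auto using INR_fact_neq_0.
Qed.

Definition raise_coef (k : R) (j m : nat) : R :=
  gbinom (INR j) m * falling (k + INR j - 1) (j - m).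

Lemma raise_coef_over k j : raise_coef k j (S j) = 0.
Proof.
  unfold raise_coef; rewrite gbinom_S; replace (INR j - INR j) with 0 by ring.
  field; apply not_0_INR; lia.
Qed.

Lemma raise_coef_S k j m : (m <= S j)%nat ->
  raise_coef k (S j) m =
  raise_coef k j m * (k + INR j + INR m) + match m with O => 0 | S m' => raise_coef k j m' end.
Proof.
  intros Hm; unfold raise_coef; rewrite S_INR.
  replace (k + (INR j + 1) - 1) with (k + INR j) by ring.
  destruct m as [|m].
  - rewrite !gbinom_0, !Nat.sub_0_r, falling_S_l; simpl INR; ring.
  - simpl (S j - S m)%nat; rewrite gbinom_succ_S, gbinom_S.
    destruct (Nat.eq_dec m j) as [-> | Hmj].
    + rewrite Nat.sub_diag; replace (j - S j)%nat with 0%nat by lia; simpl falling.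
      rewrite S_INR.
      field; pose proof (pos_INR j); lra.
    + assert (Hj : INR j = INR m + INR (j - S m) + 1)
        by (rewrite <- plus_INR, <- S_INR; f_equal; lia).
      replace (j - m)%nat with (S (j - S m)) by lia.
      rewrite falling_S_l; simpl falling; rewrite Hj, S_INR.
      field; pose proof (pos_INR m); lra.
Qed.

Lemma bracket_coef_left k l s n :
  (-1) ^ s * gbinom (k + INR (s + n) - 1) s * gbinom (l + INR (s + n) - 1) n * falling (- k) n =
  (-1) ^ (s + n) * gbinom (k + INR (s + n) - 1) (s + n) * raise_coef l (s + n) s.
Proof.
  transitivity ((-1) ^ s * gbinom (l + INR (s + n) - 1) n *
    ((-1) ^ n * gbinom (k + INR (s + n) - 1) (s + n) * gbinom (INR (s + n)) s * INR (fact n))).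
  - rewrite <- gbinom_falling_opp; ring.
  - unfold raise_coef, gbinom at 1; replace (s + n - s)%nat with n by lia.
    rewrite pow_add; field; apply INR_fact_neq_0.
Qed.

Lemma bracket_coef_right k l s n :
  (-1) ^ s * gbinom (k + INR (s + n) - 1) s * gbinom (l + INR (s + n) - 1) n * falling (- l) s =
  gbinom (l + INR (s + n) - 1) (s + n) * raise_coef k (s + n) n.
Proof.
  rewrite (Nat.add_comm s n).
  transitivity ((-1) ^ s * gbinom (k + INR (n + s) - 1) s *
    ((-1) ^ s * gbinom (l + INR (n + s) - 1) (n + s) * gbinom (INR (n + s)) n * INR (fact s))).
  - rewrite <- gbinom_falling_opp; ring.
  - unfold raise_coef, gbinom at 1; replace (n + s - n)%nat with s by lia.
    (* (-1)^s is its own inverse, which lets [field] cancel the two signs. *)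
    replace ((-1) ^ s) with (/ (-1) ^ s) at 1
      by (rewrite <- pow_inv; f_equal; field).
    field; split; [apply INR_fact_neq_0 | apply pow_nonzero; lra].
Qed.

Definition invpow (n : nat) (t : R) : R := (/ t) ^ n.

Lemma is_derive_invpow n t : t <> 0 -> is_derive (invpow n) t (- INR n * invpow (S n) t).
Proof.
  intros Ht; unfold invpow; auto_derive; auto.
  destruct n as [|n]; [simpl; ring|]; cbn [pred pow]; field; auto.
Qed.

Lemma invpow_mult n a b : invpow n (a * b) = invpow n a * invpow n b.
Proof. unfold invpow; rewrite Rinv_mult; apply Rpow_mult_distr. Qed.

Lemma neg_4pi_pow_invpow s n v :
  (-4 * PI) ^ (s + n) * invpow n (-4 * PI * v) = (-4 * PI) ^ s * invpow n v.
Proof.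
  rewrite invpow_mult, pow_add; unfold invpow at 1; rewrite pow_inv.
  field; apply pow_nonzero; pose proof PI_RGT_0; lra.
Qed.

(** * Partial and Wirtinger derivatives on the upper half-plane *)

Section DerivativeAlongCurve.

Variables (ga : R -> C) (t0 : R).

Definition dalong (F : C -> C) : C :=
  (Derive (fun t => Re (F (ga t))) t0, Derive (fun t => Im (F (ga t))) t0).

Definition ex_dalong (F : C -> C) : Prop :=
  ex_derive (fun t => Re (F (ga t))) t0 /\ ex_derive (fun t => Im (F (ga t))) t0.

Lemma ex_dalong_const (c : C) : ex_dalong (fun _ => c).
Proof. split; apply ex_derive_const. Qed.

Lemma ex_dalong_plus F G : ex_dalong F -> ex_dalong G -> ex_dalong (fun z => (F z + G z)%C).
Proof.
  intros [? ?] [? ?]; split; simpl.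
  - apply (ex_derive_plus (fun t => Re (F (ga t))) (fun t => Re (G (ga t)))); auto.
  - apply (ex_derive_plus (fun t => Im (F (ga t))) (fun t => Im (G (ga t)))); auto.
Qed.

Lemma ex_dalong_mult F G : ex_dalong F -> ex_dalong G -> ex_dalong (fun z => (F z * G z)%C).
Proof.
  intros [? ?] [? ?]; split; simpl.
  - apply (ex_derive_minus (fun t => Re (F (ga t)) * Re (G (ga t)))
                           (fun t => Im (F (ga t)) * Im (G (ga t))));
      apply ex_derive_mult; auto.
  - apply (ex_derive_plus (fun t => Re (F (ga t)) * Im (G (ga t)))
                          (fun t => Im (F (ga t)) * Re (G (ga t))));
      apply ex_derive_mult; auto.
Qed.

Lemma dalong_const (c : C) : dalong (fun _ => c) = 0%C.
Proof. unfold dalong; rewrite !Derive_const; reflexivity. Qed.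

Lemma dalong_plus F G : ex_dalong F -> ex_dalong G ->
  dalong (fun z => (F z + G z)%C) = (dalong F + dalong G)%C.
Proof.
  intros [? ?] [? ?]; unfold dalong; simpl.
  rewrite (Derive_plus (fun t => Re (F (ga t)))), (Derive_plus (fun t => Im (F (ga t)))); auto.
Qed.

Lemma dalong_mult F G : ex_dalong F -> ex_dalong G ->
  dalong (fun z => (F z * G z)%C) = (dalong F * G (ga t0) + F (ga t0) * dalong G)%C.
Proof.
  intros [? ?] [? ?]; unfold dalong; simpl.
  rewrite (Derive_minus (fun t => Re (F (ga t)) * Re (G (ga t)))
                        (fun t => Im (F (ga t)) * Im (G (ga t))))
    by (apply ex_derive_mult; auto).
  rewrite (Derive_plus (fun t => Re (F (ga t)) * Im (G (ga t)))
                       (fun t => Im (F (ga t)) * Re (G (ga t))))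
    by (apply ex_derive_mult; auto).
  rewrite !Derive_mult by auto.
  apply injective_projections; simpl; unfold Re, Im; ring.
Qed.

Lemma dalong_ext_loc F G : locally t0 (fun t => F (ga t) = G (ga t)) -> dalong F = dalong G.
Proof.
  intros HFG; unfold dalong; f_equal; apply Derive_ext_loc;
    revert HFG; apply filter_imp; intros t ->; reflexivity.
Qed.

Lemma ex_dalong_ext_loc F G : locally t0 (fun t => F (ga t) = G (ga t)) ->
  ex_dalong F -> ex_dalong G.
Proof.
  intros HFG [HRe HIm]; split;
    [apply (ex_derive_ext_loc (fun t => Re (F (ga t))))
    |apply (ex_derive_ext_loc (fun t => Im (F (ga t))))];
    auto; revert HFG; apply filter_imp; intros t ->; reflexivity.
Qed.

End DerivativeAlongCurve.

(* [du F tau] and [dv F tau] are, definitionally, [dalong (hline tau) (Re tau) F] and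
   [dalong (vline tau) (Im tau) F]. *)
Definition hline (tau : C) (t : R) : C := (t, Im tau).
Definition vline (tau : C) (t : R) : C := (Re tau, t).

Definition ex_partials (F : C -> C) (tau : C) : Prop :=
  ex_dalong (hline tau) (Re tau) F /\ ex_dalong (vline tau) (Im tau) F.

Lemma locally_upper tau : upper tau -> locally tau upper.
Proof.
  intros Ht; exists (mkposreal _ Ht); intros [x y] [_ Hy]; unfold upper; simpl.
  change (Rabs (y - Im tau) < Im tau) in Hy; apply Rabs_def2 in Hy; lra.
Qed.

Lemma locally_hline (P : C -> Prop) tau : upper tau -> (forall z, upper z -> P z) ->
  locally (Re tau) (fun t => P (hline tau t)).
Proof. intros Ht HP; apply filter_forall; intros t; apply HP, Ht. Qed.

Lemma locally_vline (P : C -> Prop) tau : upper tau -> (forall z, upper z -> P z) ->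
  locally (Im tau) (fun t => P (vline tau t)).
Proof.
  intros Ht HP; exists (mkposreal _ Ht); intros t Ht'; apply HP; unfold upper, vline; simpl.
  change (Rabs (t - Im tau) < Im tau) in Ht'; apply Rabs_def2 in Ht'; lra.
Qed.

Open Scope C_scope.

(* Coquelicot states its [sum_n] lemmas with the generic [plus] and [mult], which [rewrite]
   does not match against [Cplus] and [Cmult]; hence these instances at C.  Likewise an
   equation between sums lives in [C_AbelianMonoid] and must be cast [:> C] for [ring]. *)
Lemma sum_n_ext_loc_C (a b : nat -> C) n : (forall m, (m <= n)%nat -> a m = b m) ->
  sum_n a n = sum_n b n.
Proof. exact (sum_n_ext_loc a b n). Qed.

Lemma sum_n_plus_C (a b : nat -> C) n : sum_n (fun m => a m + b m) n = sum_n a n + sum_n b n.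
Proof. exact (sum_n_plus a b n). Qed.

Lemma sum_n_mult_l_C (c : C) (a : nat -> C) n : sum_n (fun m => c * a m) n = c * sum_n a n.
Proof. exact (sum_n_mult_l (K := C_Ring) c a n). Qed.

Lemma sum_n_mult_r_C (c : C) (a : nat -> C) n : sum_n (fun m => a m * c) n = sum_n a n * c.
Proof. exact (sum_n_mult_r (K := C_Ring) c a n). Qed.

Lemma sum_Sn_C (a : nat -> C) n : sum_n a (S n) = sum_n a n + a (S n).
Proof. exact (sum_Sn a n). Qed.

Lemma sum_n_shift_C (a : nat -> C) n : sum_n a (S n) = a 0%nat + sum_n (fun m => a (S m)) n.
Proof. unfold sum_n; rewrite sum_Sn_m, sum_n_m_S by lia; reflexivity. Qed.

Lemma sum_n_rev_C (a : nat -> C) n : sum_n a n = sum_n (fun s => a (n - s)%nat) n.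
Proof.
  induction n as [|n IH]; [rewrite !sum_O; reflexivity|].
  rewrite sum_Sn_C, sum_n_shift_C, IH; simpl; apply Cplus_comm.
Qed.

Section PartialDerivatives.

Variables (F G : C -> C) (tau : C).

Lemma du_ext_upper : upper tau -> (forall z, upper z -> F z = G z) -> du F tau = du G tau.
Proof.
  intros Ht HFG; apply (dalong_ext_loc (hline tau)), (locally_hline (fun z => F z = G z)); auto.
Qed.

Lemma dv_ext_upper : upper tau -> (forall z, upper z -> F z = G z) -> dv F tau = dv G tau.
Proof.
  intros Ht HFG; apply (dalong_ext_loc (vline tau)), (locally_vline (fun z => F z = G z)); auto.
Qed.

Lemma ex_partials_ext_upper : upper tau -> (forall z, upper z -> F z = G z) ->
  ex_partials F tau -> ex_partials G tau.
Proof.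
  intros Ht HFG [Hu Hv]; split.
  - apply (ex_dalong_ext_loc _ _ F); auto; apply (locally_hline (fun z => F z = G z)); auto.
  - apply (ex_dalong_ext_loc _ _ F); auto; apply (locally_vline (fun z => F z = G z)); auto.
Qed.

Lemma ex_partials_plus : ex_partials F tau -> ex_partials G tau ->
  ex_partials (fun z => F z + G z) tau.
Proof. intros [? ?] [? ?]; split; apply ex_dalong_plus; auto. Qed.

Lemma ex_partials_mult : ex_partials F tau -> ex_partials G tau ->
  ex_partials (fun z => F z * G z) tau.
Proof. intros [? ?] [? ?]; split; apply ex_dalong_mult; auto. Qed.

Lemma du_plus : ex_partials F tau -> ex_partials G tau ->
  du (fun z => F z + G z) tau = du F tau + du G tau.
Proof. intros [? ?] [? ?]; apply (dalong_plus (hline tau)); auto. Qed.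

Lemma dv_plus : ex_partials F tau -> ex_partials G tau ->
  dv (fun z => F z + G z) tau = dv F tau + dv G tau.
Proof. intros [? ?] [? ?]; apply (dalong_plus (vline tau)); auto. Qed.

Lemma du_mult : ex_partials F tau -> ex_partials G tau ->
  du (fun z => F z * G z) tau = du F tau * G tau + F tau * du G tau.
Proof.
  intros [HFu _] [HGu _]; destruct tau as [x y].
  exact (dalong_mult (hline (x, y)) x F G HFu HGu).
Qed.

Lemma dv_mult : ex_partials F tau -> ex_partials G tau ->
  dv (fun z => F z * G z) tau = dv F tau * G tau + F tau * dv G tau.
Proof.
  intros [_ HFv] [_ HGv]; destruct tau as [x y].
  exact (dalong_mult (vline (x, y)) y F G HFv HGv).
Qed.

End PartialDerivatives.

Lemma ex_partials_const (c : C) tau : ex_partials (fun _ => c) tau.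
Proof. split; apply ex_dalong_const. Qed.

Lemma du_const (c : C) tau : du (fun _ => c) tau = 0.
Proof. apply (dalong_const (hline tau)). Qed.

Lemma dv_const (c : C) tau : dv (fun _ => c) tau = 0.
Proof. apply (dalong_const (vline tau)). Qed.

Definition of_Im (phi : R -> R) (z : C) : C := RtoC (phi (Im z)).

Lemma ex_partials_of_Im phi tau : ex_derive phi (Im tau) -> ex_partials (of_Im phi) tau.
Proof.
  intros Hphi; repeat split; unfold of_Im, hline, vline; simpl;
    solve [apply ex_derive_const | exact Hphi].
Qed.

Lemma du_of_Im phi tau : du (of_Im phi) tau = 0.
Proof. unfold du, of_Im; simpl; rewrite !Derive_const; reflexivity. Qed.

Lemma dv_of_Im phi tau : dv (of_Im phi) tau = RtoC (Derive phi (Im tau)).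
Proof. unfold dv, of_Im; simpl; rewrite Derive_const; reflexivity. Qed.

Section WirtingerCalculus.

Variables (F G : C -> C) (tau : C).
Hypotheses (HF : ex_partials F tau) (HG : ex_partials G tau).

Lemma dtau_plus : dtau (fun z => F z + G z) tau = dtau F tau + dtau G tau.
Proof. unfold dtau; rewrite du_plus, dv_plus by auto; ring. Qed.

Lemma dtaubar_plus : dtaubar (fun z => F z + G z) tau = dtaubar F tau + dtaubar G tau.
Proof. unfold dtaubar; rewrite du_plus, dv_plus by auto; ring. Qed.

Lemma dtau_mult : dtau (fun z => F z * G z) tau = dtau F tau * G tau + F tau * dtau G tau.
Proof. unfold dtau; rewrite du_mult, dv_mult by auto; ring. Qed.

Lemma dtaubar_mult :
  dtaubar (fun z => F z * G z) tau = dtaubar F tau * G tau + F tau * dtaubar G tau.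
Proof. unfold dtaubar; rewrite du_mult, dv_mult by auto; ring. Qed.

End WirtingerCalculus.

Lemma dtau_scal (c : C) F tau : ex_partials F tau -> dtau (fun z => c * F z) tau = c * dtau F tau.
Proof.
  intros HF; rewrite (dtau_mult (fun _ => c)) by auto using ex_partials_const.
  unfold dtau at 1; rewrite du_const, dv_const; ring.
Qed.

Lemma dtaubar_scal (c : C) F tau : ex_partials F tau ->
  dtaubar (fun z => c * F z) tau = c * dtaubar F tau.
Proof.
  intros HF; rewrite (dtaubar_mult (fun _ => c)) by auto using ex_partials_const.
  unfold dtaubar at 1; rewrite du_const, dv_const; ring.
Qed.

Lemma dtau_of_Im phi tau : dtau (of_Im phi) tau = - Ci / 2 * RtoC (Derive phi (Im tau)).
Proof. unfold dtau; rewrite du_of_Im, dv_of_Im; field. Qed.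

Lemma dtau_ext_upper F G tau : upper tau -> (forall z, upper z -> F z = G z) ->
  dtau F tau = dtau G tau.
Proof.
  intros; unfold dtau; rewrite (du_ext_upper F G), (dv_ext_upper F G) by auto; reflexivity.
Qed.

Lemma dtaubar_ext_upper F G tau : upper tau -> (forall z, upper z -> F z = G z) ->
  dtaubar F tau = dtaubar G tau.
Proof.
  intros; unfold dtaubar; rewrite (du_ext_upper F G), (dv_ext_upper F G) by auto; reflexivity.
Qed.

Section Sums.

Variables (T : nat -> C -> C) (tau : C).
Hypothesis Htau : upper tau.

Lemma ex_partials_sum n : (forall m, (m <= n)%nat -> ex_partials (T m) tau) ->
  ex_partials (fun z => sum_n (fun m => T m z) n) tau.
Proof.
  induction n as [|n IH]; intros HT.
  - apply (ex_partials_ext_upper (T 0%nat)); auto; intros z _; symmetry; exact (sum_O _).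
  - apply (ex_partials_ext_upper (fun z => sum_n (fun m => T m z) n + T (S n) z)); auto.
    + intros z _; symmetry; exact (sum_Sn _ _).
    + apply ex_partials_plus; auto.
Qed.

Lemma dtau_sum n : (forall m, (m <= n)%nat -> ex_partials (T m) tau) ->
  dtau (fun z => sum_n (fun m => T m z) n) tau = sum_n (fun m => dtau (T m) tau) n.
Proof.
  induction n as [|n IH]; intros HT.
  - rewrite sum_O; apply dtau_ext_upper; auto; intros z _; exact (sum_O _).
  - rewrite sum_Sn, <- IH by auto.
    rewrite (dtau_ext_upper _ (fun z => sum_n (fun m => T m z) n + T (S n) z)); auto.
    + apply dtau_plus; auto using ex_partials_sum.
    + intros z _; exact (sum_Sn _ _).
Qed.

Lemma dtaubar_sum n : (forall m, (m <= n)%nat -> ex_partials (T m) tau) ->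
  dtaubar (fun z => sum_n (fun m => T m z) n) tau = sum_n (fun m => dtaubar (T m) tau) n.
Proof.
  induction n as [|n IH]; intros HT.
  - rewrite sum_O; apply dtaubar_ext_upper; auto; intros z _; exact (sum_O _).
  - rewrite sum_Sn, <- IH by auto.
    rewrite (dtaubar_ext_upper _ (fun z => sum_n (fun m => T m z) n + T (S n) z)); auto.
    + apply dtaubar_plus; auto using ex_partials_sum.
    + intros z _; exact (sum_Sn _ _).
Qed.

End Sums.

(** * Smooth functions *)

Definition C1_at (F : C -> C) (tau : C) : Prop := ex_partials F tau /\ continuous F tau.

Lemma smooth_on_H_C1 F : smooth_on_H F <-> forall w tau, upper tau -> C1_at (dword w F) tau.
Proof.
  split; intros HF w tau Ht.
  - destruct (HF w tau Ht) as (? & ? & ? & ? & ?); repeat split; auto.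
  - destruct (HF w tau Ht) as [[[? ?] [? ?]] ?]; repeat split; auto.
Qed.

Lemma smooth_C1 F w tau : smooth_on_H F -> upper tau -> C1_at (dword w F) tau.
Proof. intros HF; apply smooth_on_H_C1, HF. Qed.

Lemma smooth_ex_partials_dword F w tau : smooth_on_H F -> upper tau -> ex_partials (dword w F) tau.
Proof. intros HF Ht; apply (smooth_C1 F w tau HF Ht). Qed.

Lemma smooth_ex_partials F tau : smooth_on_H F -> upper tau -> ex_partials F tau.
Proof. apply (smooth_ex_partials_dword F nil). Qed.

Lemma C1_at_ext_upper F G tau : upper tau -> (forall z, upper z -> F z = G z) ->
  C1_at F tau -> C1_at G tau.
Proof.
  intros Ht HFG [HF HcF]; split.
  - apply (ex_partials_ext_upper F); auto.
  - apply (continuous_ext_loc _ F); auto.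
    apply (filter_imp upper); auto using locally_upper.
Qed.

Lemma dword_ext_upper F G : (forall z, upper z -> F z = G z) ->
  forall w z, upper z -> dword w F z = dword w G z.
Proof.
  intros HFG w; induction w as [|[|] w IH]; intros z Hz; simpl; auto.
  - apply du_ext_upper; auto.
  - apply dv_ext_upper; auto.
Qed.

Lemma smooth_ext_upper F G : (forall z, upper z -> F z = G z) ->
  smooth_on_H F -> smooth_on_H G.
Proof.
  rewrite !smooth_on_H_C1; intros HFG HF w tau Ht.
  apply (C1_at_ext_upper (dword w F)); auto using dword_ext_upper.
Qed.

Lemma du_lin a b F G tau : ex_partials F tau -> ex_partials G tau ->
  du (fun z => a * F z + b * G z) tau = a * du F tau + b * du G tau.
Proof.
  intros HF HG; rewrite du_plus, !du_mult, !du_const; try ring;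
    auto using ex_partials_plus, ex_partials_mult, ex_partials_const.
Qed.

Lemma dv_lin a b F G tau : ex_partials F tau -> ex_partials G tau ->
  dv (fun z => a * F z + b * G z) tau = a * dv F tau + b * dv G tau.
Proof.
  intros HF HG; rewrite dv_plus, !dv_mult, !dv_const; try ring;
    auto using ex_partials_plus, ex_partials_mult, ex_partials_const.
Qed.

Lemma dword_lin a b F G : smooth_on_H F -> smooth_on_H G ->
  forall w z, upper z -> dword w (fun y => a * F y + b * G y) z = a * dword w F z + b * dword w G z.
Proof.
  intros HF HG w; induction w as [|[|] w IH]; intros z Hz; simpl; auto.
  - rewrite (du_ext_upper _ (fun y => a * dword w F y + b * dword w G y)) by auto.
    apply du_lin; apply smooth_ex_partials_dword; auto.
  - rewrite (dv_ext_upper _ (fun y => a * dword w F y + b * dword w G y)) by auto.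
    apply dv_lin; apply smooth_ex_partials_dword; auto.
Qed.

Lemma smooth_lin a b F G : smooth_on_H F -> smooth_on_H G ->
  smooth_on_H (fun y => a * F y + b * G y).
Proof.
  intros HF HG; apply smooth_on_H_C1; intros w tau Ht.
  destruct (smooth_C1 F w tau HF Ht) as [HpF HcF], (smooth_C1 G w tau HG Ht) as [HpG HcG].
  apply (C1_at_ext_upper (fun y => a * dword w F y + b * dword w G y)); auto.
  - intros z Hz; symmetry; apply dword_lin; auto.
  - split.
    + auto using ex_partials_plus, ex_partials_mult, ex_partials_const.
    + apply (continuous_plus (V := C_NormedModule));
        apply (continuous_scal_r (V := C_NormedModule)); auto.
Qed.

Lemma dword_app w b F : dword (w ++ b :: nil) F = dword w (if b then du F else dv F).
Proof. induction w as [|a w IH]; simpl; [|rewrite IH]; reflexivity. Qed.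

Lemma smooth_du F : smooth_on_H F -> smooth_on_H (du F).
Proof.
  rewrite !smooth_on_H_C1; intros HF w tau Ht.
  rewrite <- (dword_app w true); auto.
Qed.

Lemma smooth_dv F : smooth_on_H F -> smooth_on_H (dv F).
Proof.
  rewrite !smooth_on_H_C1; intros HF w tau Ht.
  rewrite <- (dword_app w false); auto.
Qed.

Lemma dtau_du_dv F z : dtau F z = / 2 * du F z + (- / 2 * Ci) * dv F z.
Proof. unfold dtau; ring. Qed.

Lemma dtaubar_du_dv F z : dtaubar F z = / 2 * du F z + (/ 2 * Ci) * dv F z.
Proof. unfold dtaubar; ring. Qed.

Lemma smooth_dtau F : smooth_on_H F -> smooth_on_H (dtau F).
Proof.
  intros HF; apply (smooth_ext_upper (fun z => / 2 * du F z + (- / 2 * Ci) * dv F z)).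
  - intros z _; symmetry; apply dtau_du_dv.
  - apply smooth_lin; auto using smooth_du, smooth_dv.
Qed.

Lemma smooth_dtaubar F : smooth_on_H F -> smooth_on_H (dtaubar F).
Proof.
  intros HF; apply (smooth_ext_upper (fun z => / 2 * du F z + (/ 2 * Ci) * dv F z)).
  - intros z _; symmetry; apply dtaubar_du_dv.
  - apply smooth_lin; auto using smooth_du, smooth_dv.
Qed.

Lemma smooth_iter_dtau F n : smooth_on_H F -> smooth_on_H (Nat.iter n dtau F).
Proof. intros HF; induction n as [|n IH]; simpl; auto using smooth_dtau. Qed.

Lemma continuous_Re_comp (G : C -> C) tau : continuous G tau -> continuous (fun z => Re (G z)) tau.
Proof.
  intros HG; apply (continuous_comp G fst); auto.
  rewrite (surjective_pairing (G tau)); apply continuous_fst.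
Qed.

Lemma continuous_Im_comp (G : C -> C) tau : continuous G tau -> continuous (fun z => Im (G z)) tau.
Proof.
  intros HG; apply (continuous_comp G snd); auto.
  rewrite (surjective_pairing (G tau)); apply continuous_snd.
Qed.

Lemma continuity_2d_pt_continuous (g : C -> R) x y :
  continuous g (x, y) -> continuity_2d_pt (fun u v => g (u, v)) x y.
Proof.
  intros Hg; apply continuity_2d_pt_filterlim.
  eapply filterlim_ext; [|exact Hg]; intros [u v]; reflexivity.
Qed.

Lemma Schwarz_upper (h : R -> R -> R) x y : 0 < y ->
  (forall u v, 0 < v ->
     ex_derive (fun s => h s v) u /\ ex_derive (fun t => h u t) v /\
     ex_derive (fun s => Derive (fun t => h s t) v) u /\
     ex_derive (fun t => Derive (fun s => h s t) u) v) ->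
  continuity_2d_pt (fun u v => Derive (fun s => Derive (fun t => h s t) v) u) x y ->
  continuity_2d_pt (fun u v => Derive (fun t => Derive (fun s => h s t) u) v) x y ->
  Derive (fun s => Derive (fun t => h s t) y) x = Derive (fun t => Derive (fun s => h s t) x) y.
Proof.
  intros Hy Hh C12 C21; apply Schwarz; auto.
  exists (mkposreal _ Hy); intros u v _ Hv; apply Hh; simpl in Hv.
  apply Rabs_def2 in Hv; lra.
Qed.

Lemma du_dv_comm F tau : smooth_on_H F -> upper tau -> du (dv F) tau = dv (du F) tau.
Proof.
  intros HF Ht; destruct tau as [x y]; unfold upper in Ht; simpl in Ht.
  assert (Hd : forall w u v, 0 < v -> ex_partials (dword w F) (u, v))
    by (intros w u v Hv; apply smooth_ex_partials_dword; auto).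
  assert (Hh : forall (p : C -> R), (p = Re \/ p = Im) -> forall u v, 0 < v ->
     ex_derive (fun s => p (F (s, v))) u /\ ex_derive (fun t => p (F (u, t))) v /\
     ex_derive (fun s => Derive (fun t => p (F (s, t))) v) u /\
     ex_derive (fun t => Derive (fun s => p (F (s, t))) u) v).
  { intros p Hp u v Hv.
    destruct (Hd nil u v Hv) as [[? ?] [? ?]], (Hd (true :: nil) u v Hv) as [_ [? ?]],
      (Hd (false :: nil) u v Hv) as [[? ?] _].
    destruct Hp as [-> | ->]; repeat split; assumption. }
  pose proof (proj2 (smooth_C1 F (true :: false :: nil) (x, y) HF Ht)) as C12.
  pose proof (proj2 (smooth_C1 F (false :: true :: nil) (x, y) HF Ht)) as C21.
  apply injective_projections.
  - change (Derive (fun s => Derive (fun t => Re (F (s, t))) y) x =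
            Derive (fun t => Derive (fun s => Re (F (s, t))) x) y).
    apply (Schwarz_upper (fun u v => Re (F (u, v)))); [exact Ht | apply (Hh Re); auto | |].
    + apply (continuity_2d_pt_continuous (fun z => Re (du (dv F) z))).
      apply continuous_Re_comp; exact C12.
    + apply (continuity_2d_pt_continuous (fun z => Re (dv (du F) z))).
      apply continuous_Re_comp; exact C21.
  - change (Derive (fun s => Derive (fun t => Im (F (s, t))) y) x =
            Derive (fun t => Derive (fun s => Im (F (s, t))) x) y).
    apply (Schwarz_upper (fun u v => Im (F (u, v)))); [exact Ht | apply (Hh Im); auto | |].
    + apply (continuity_2d_pt_continuous (fun z => Im (du (dv F) z))).
      apply continuous_Im_comp; exact C12.
    + apply (continuity_2d_pt_continuous (fun z => Im (dv (du F) z))).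
      apply continuous_Im_comp; exact C21.
Qed.

Section MixedWirtinger.

Variables (F : C -> C) (tau : C).
Hypotheses (HF : smooth_on_H F) (Htau : upper tau).

Let Hu : ex_partials (du F) tau := smooth_ex_partials (du F) tau (smooth_du F HF) Htau.
Let Hv : ex_partials (dv F) tau := smooth_ex_partials (dv F) tau (smooth_dv F HF) Htau.

Lemma dtau_dtaubar : dtau (dtaubar F) tau = / 4 * (du (du F) tau + dv (dv F) tau).
Proof.
  rewrite dtau_du_dv, (du_ext_upper (dtaubar F) _ tau Htau (fun z _ => dtaubar_du_dv F z)),
    (dv_ext_upper (dtaubar F) _ tau Htau (fun z _ => dtaubar_du_dv F z)).
  rewrite du_lin, dv_lin, du_dv_comm by auto.
  apply injective_projections; simpl; field.
Qed.

Lemma dtaubar_dtau : dtaubar (dtau F) tau = / 4 * (du (du F) tau + dv (dv F) tau).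
Proof.
  rewrite dtaubar_du_dv, (du_ext_upper (dtau F) _ tau Htau (fun z _ => dtau_du_dv F z)),
    (dv_ext_upper (dtau F) _ tau Htau (fun z _ => dtau_du_dv F z)).
  rewrite du_lin, dv_lin, du_dv_comm by auto.
  apply injective_projections; simpl; field.
Qed.

End MixedWirtinger.

(** * The lowering operator *)

Lemma dtau_scal_of_Im_mult (c : C) phi D tau : ex_partials D tau -> ex_derive phi (Im tau) ->
  dtau (fun z => c * (of_Im phi z * D z)) tau =
  c * (- Ci / 2 * RtoC (Derive phi (Im tau)) * D tau + of_Im phi tau * dtau D tau).
Proof.
  intros HD Hphi.
  rewrite dtau_scal, dtau_mult, dtau_of_Im by auto using ex_partials_mult, ex_partials_of_Im.
  reflexivity.
Qed.

Lemma Lop_mult F G tau : ex_partials F tau -> ex_partials G tau ->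
  Lop (fun z => F z * G z) tau = Lop F tau * G tau + F tau * Lop G tau.
Proof. intros; unfold Lop; rewrite dtaubar_mult by auto; ring. Qed.

Lemma Lop_scal (c : C) F tau : ex_partials F tau -> Lop (fun z => c * F z) tau = c * Lop F tau.
Proof. intros; unfold Lop; rewrite dtaubar_scal by auto; ring. Qed.

Lemma Lop_sum (T : nat -> C -> C) n tau : upper tau ->
  (forall m, (m <= n)%nat -> ex_partials (T m) tau) ->
  Lop (fun z => sum_n (fun m => T m z) n) tau = sum_n (fun m => Lop (T m) tau) n.
Proof.
  intros; unfold Lop; rewrite dtaubar_sum by auto; symmetry; apply sum_n_mult_l_C.
Qed.

Lemma ex_partials_Lop F tau : smooth_on_H F -> upper tau -> ex_partials (Lop F) tau.
Proof.
  intros HF Ht.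
  change (ex_partials (fun z => (- (2 * Ci) * of_Im (fun t => (t ^ 2)%R) z) * dtaubar F z) tau).
  apply ex_partials_mult.
  - apply ex_partials_mult; [apply ex_partials_const | apply ex_partials_of_Im; auto_derive; auto].
  - apply smooth_ex_partials; auto using smooth_dtaubar.
Qed.

Lemma dtaubar_eq_Lop F z : upper z -> dtaubar F z = Ci / 2 * RtoC (invpow 2 (Im z)) * Lop F z.
Proof.
  unfold Lop, invpow, upper; generalize (dtaubar F z) (Im z); intros d v Hv.
  apply injective_projections; simpl; field; lra.
Qed.

Lemma dtau_Lop k F tau : smooth_on_H F -> upper tau ->
  dtau (Lop F) tau = Ci / 2 * Lap k F tau + Ci * RtoC ((k - 2) / (2 * Im tau)) * Lop F tau.
Proof.
  intros HF Ht.
  rewrite (dtau_ext_upper _ (fun z => - (2 * Ci) * (of_Im (fun t => (t ^ 2)%R) z * dtaubar F z)))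
    by (auto; intros z _; unfold Lop, of_Im; ring).
  rewrite dtau_scal_of_Im_mult, dtau_dtaubar
    by (auto using smooth_ex_partials, smooth_dtaubar; auto_derive; auto).
  replace (Derive (fun t => (t ^ 2)%R) (Im tau)) with (2 * Im tau)%R
    by (symmetry; apply is_derive_unique; auto_derive; auto; ring).
  unfold Lap, Lop, of_Im; rewrite dtaubar_du_dv.
  generalize (du (du F) tau) (dv (dv F) tau) (du F tau) (dv F tau).
  unfold upper in Ht; generalize (Im tau) Ht; intros v Hv a b c d.
  apply injective_projections; simpl; field; lra.
Qed.

Lemma dtaubar_dtau_comm F tau : smooth_on_H F -> upper tau ->
  dtaubar (dtau F) tau = dtau (dtaubar F) tau.
Proof. intros; rewrite dtaubar_dtau, dtau_dtaubar; auto. Qed.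

Lemma Lop_iter_dtau_harmonic k f : smooth_on_H f -> (forall z, upper z -> Lap k f z = 0) ->
  forall n tau, upper tau ->
  Lop (Nat.iter n dtau f) tau =
  RtoC (falling (- k) n) * Cpow (- Ci / 2) n * RtoC (invpow n (Im tau)) * Lop f tau.
Proof.
  intros Hf Hharm n; induction n as [|n IH]; intros tau Ht.
  - simpl; unfold invpow; simpl; ring.
  - assert (Hv : Im tau <> 0%R) by (unfold upper in Ht; lra).
    set (c := RtoC (falling (- k) n) * Cpow (- Ci / 2) n).
    change (Nat.iter (S n) dtau f) with (dtau (Nat.iter n dtau f)).
    unfold Lop at 1; rewrite dtaubar_dtau_comm by auto using smooth_iter_dtau.
    rewrite (dtau_ext_upper _ (fun z => (Ci / 2 * c) * (of_Im (invpow (2 + n)) z * Lop f z)));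
      [| exact Ht | intros z Hz; rewrite dtaubar_eq_Lop, IH by auto;
                    unfold c, of_Im, invpow; rewrite pow_add, RtoC_mult; ring].
    rewrite dtau_scal_of_Im_mult
      by (auto using ex_partials_Lop; eexists; apply is_derive_invpow; auto).
    rewrite (is_derive_unique _ _ _ (is_derive_invpow _ _ Hv)), (dtau_Lop k), Hharm by auto.
    unfold c, of_Im, invpow; rewrite Cpow_S; simpl falling; simpl pow; rewrite plus_INR.
    generalize (Cpow (- Ci / 2) n) (falling (- k) n) (Lop f tau) (INR n) ((/ Im tau) ^ n)%R.
    intros P Fk L N w; revert Hv; generalize (Im tau); intros v Hv.
    apply injective_projections; simpl; field; lra.
Qed.

(** * The raising operator *)

Lemma sum_raise_coef_S k j (E : nat -> C) :
  sum_n (fun m => RtoC (raise_coef k (S j) m) * E m) (S j) =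
  sum_n (fun m => RtoC (raise_coef k j m * (k + INR j + INR m)) * E m
                  + RtoC (raise_coef k j m) * E (S m)) j :> C.
Proof.
  rewrite (sum_n_ext_loc_C _ (fun m => RtoC (raise_coef k j m * (k + INR j + INR m)) * E m
      + RtoC (match m with O => 0%R | S m' => raise_coef k j m' end) * E m))
    by (intros m Hm; rewrite raise_coef_S, RtoC_plus by auto; ring).
  rewrite sum_n_plus_C, sum_Sn_C, sum_n_shift_C, raise_coef_over.
  rewrite sum_n_plus_C, Rmult_0_l; ring.
Qed.

Lemma Rit_S k j F : Rit k (S j) F = Rop (k + 2 * INR j) (Rit k j F).
Proof.
  revert k F; induction j as [|j IH]; intros k F.
  - simpl; rewrite Rmult_0_r, Rplus_0_r; reflexivity.
  - change (Rit k (S (S j)) F) with (Rit (k + 2) (S j) (Rop k F)); rewrite IH.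
    replace (k + 2 + 2 * INR j)%R with (k + 2 * INR (S j))%R by (rewrite S_INR; ring).
    reflexivity.
Qed.

Lemma Rop_sum kappa (T : nat -> C -> C) n tau : upper tau ->
  (forall m, (m <= n)%nat -> ex_partials (T m) tau) ->
  Rop kappa (fun z => sum_n (fun m => T m z) n) tau = sum_n (fun m => Rop kappa (T m) tau) n.
Proof.
  intros; unfold Rop; rewrite dtau_sum by auto.
  rewrite <- !sum_n_mult_l_C, <- sum_n_plus_C; reflexivity.
Qed.

Lemma Rop_invpow_mult kappa (c : C) n D tau : upper tau -> ex_partials D tau ->
  Rop kappa (fun z => c * (of_Im (invpow n) z * D z)) tau =
  c * (RtoC ((kappa - INR n) * invpow (S n) (Im tau)) * D tau
       + RtoC (invpow n (Im tau)) * (2 * Ci * dtau D tau)).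
Proof.
  intros Ht HD; assert (Hv : Im tau <> 0%R) by (unfold upper in Ht; lra).
  unfold Rop; rewrite dtau_scal_of_Im_mult by (auto; eexists; apply is_derive_invpow; auto).
  rewrite (is_derive_unique _ _ _ (is_derive_invpow _ _ Hv)).
  unfold of_Im, invpow; simpl pow.
  generalize (dtau D tau) (D tau) (INR n) ((/ Im tau) ^ n)%R; intros d0 d1 N w.
  revert Hv; generalize (Im tau); intros v Hv.
  apply injective_projections; simpl; field; auto.
Qed.

Lemma Rop_ext_upper kappa F G tau : upper tau -> (forall z, upper z -> F z = G z) ->
  Rop kappa F tau = Rop kappa G tau.
Proof. intros Ht HFG; unfold Rop; rewrite (dtau_ext_upper F G), HFG by auto; reflexivity. Qed.

Lemma Rit_expansion k F : smooth_on_H F -> forall j tau, upper tau ->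
  Rit k j F tau = sum_n (fun m => RtoC (raise_coef k j m) * Cpow (2 * Ci) m *
                                   (of_Im (invpow (j - m)) tau * Nat.iter m dtau F tau)) j.
Proof.
  intros HF j; induction j as [|j IH]; intros tau Ht.
  - rewrite sum_O; unfold raise_coef, of_Im, invpow; rewrite gbinom_0; simpl.
    rewrite Rmult_1_r; ring.
  - assert (Hiter : forall m, ex_partials (Nat.iter m dtau F) tau)
      by (intros; apply smooth_ex_partials; auto using smooth_iter_dtau).
    set (E m := Cpow (2 * Ci) m * (of_Im (invpow (S j - m)) tau * Nat.iter m dtau F tau)).
    rewrite Rit_S, (Rop_ext_upper _ _ _ _ Ht IH), Rop_sum; auto.
    + rewrite (sum_n_ext_loc_C _ (fun m => RtoC (raise_coef k j m * (k + INR j + INR m)) * E m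
                                       + RtoC (raise_coef k j m) * E (S m))).
      * rewrite <- sum_raise_coef_S; apply sum_n_ext_loc_C; intros m _; unfold E; ring.
      * intros m Hm; rewrite Rop_invpow_mult by auto; unfold E, of_Im.
        rewrite minus_INR, Nat.sub_succ_l, Cpow_S by auto; simpl Nat.sub.
        replace (k + 2 * INR j - (INR j - INR m))%R with (k + INR j + INR m)%R by ring.
        rewrite !RtoC_mult; simpl; ring.
    + intros m _; apply ex_partials_mult; [apply ex_partials_const|].
      apply ex_partials_mult; auto; apply ex_partials_of_Im; eexists; apply is_derive_invpow.
      unfold upper in Ht; lra.
Qed.

(** * Normalized derivatives and the bracket *)

Lemma two_pi_i_neq_0 : RtoC (2 * PI) * Ci <> 0.
Proof.
  apply Cmult_neq_0; [|exact Ci_nz].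
  intros E; apply RtoC_inj in E; pose proof PI_RGT_0; lra.
Qed.

Lemma RtoC_pow_neg_4pi m :
  RtoC ((-4 * PI) ^ m) = Cpow (2 * Ci) m * Cpow (RtoC (2 * PI) * Ci) m.
Proof.
  rewrite RtoC_pow, <- Cpow_mult_l; f_equal.
  apply injective_projections; simpl; ring.
Qed.

Lemma RtoC_invpow_neg_4pi n :
  RtoC (invpow n (-4 * PI)) = / Cpow (RtoC (2 * PI) * Ci) n * Cpow (- Ci / 2) n.
Proof.
  unfold invpow; rewrite RtoC_pow, <- Cpow_inv, <- Cpow_mult_l by apply two_pi_i_neq_0; f_equal.
  pose proof PI_RGT_0; apply injective_projections; simpl; field; lra.
Qed.

Lemma iter_dtau_dnorm m F z : Nat.iter m dtau F z = Cpow (RtoC (2 * PI) * Ci) m * dnorm m F z.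
Proof. unfold dnorm; field; apply Cpow_nz, two_pi_i_neq_0. Qed.

Lemma Rit_expansion_dnorm k F : smooth_on_H F -> forall j tau, upper tau ->
  Rit k j F tau = sum_n (fun m => RtoC (raise_coef k j m * (-4 * PI) ^ m * invpow (j - m) (Im tau))
                                   * dnorm m F tau) j.
Proof.
  intros HF j tau Ht; rewrite Rit_expansion by auto; apply sum_n_ext_loc_C; intros m _.
  rewrite !RtoC_mult, RtoC_pow_neg_4pi, iter_dtau_dnorm; unfold of_Im; ring.
Qed.

Lemma ex_partials_dnorm m F tau : smooth_on_H F -> upper tau -> ex_partials (dnorm m F) tau.
Proof.
  intros; apply ex_partials_mult; [apply ex_partials_const|].
  apply smooth_ex_partials; auto using smooth_iter_dtau.
Qed.

Lemma Lop_dnorm_harmonic k f : smooth_on_H f -> (forall z, upper z -> Lap k f z = 0) ->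
  forall n tau, upper tau ->
  Lop (dnorm n f) tau = RtoC (falling (- k) n * invpow n (-4 * PI * Im tau)) * Lop f tau.
Proof.
  intros Hf Hharm n tau Ht; unfold dnorm.
  rewrite Lop_scal, (Lop_iter_dtau_harmonic k) by auto using smooth_ex_partials, smooth_iter_dtau.
  rewrite invpow_mult, (RtoC_mult (falling _ _)), (RtoC_mult (invpow n _)), RtoC_invpow_neg_4pi.
  ring.
Qed.

Lemma sum_n_eq_lin_rev (c c1 c2 x y : C) (T a b : nat -> C) j :
  (forall s, (s <= j)%nat -> c * T s = c1 * a (j - s)%nat * y + c2 * x * b s) ->
  c * sum_n T j = c1 * sum_n a j * y + c2 * x * sum_n b j :> C.
Proof.
  intros HT; rewrite <- sum_n_mult_l_C, (sum_n_ext_loc_C _ _ j HT), sum_n_plus_C, (sum_n_rev_C a j).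
  rewrite <- sum_n_mult_l_C, <- sum_n_mult_l_C, <- sum_n_mult_r_C; reflexivity.
Qed.

Lemma bracket_term k l s n v (X Y Lf Lg : C) :
  Cpow (RtoC (-4 * PI)) (s + n) *
    (RtoC ((-1) ^ s * gbinom (k + INR (s + n) - 1) s * gbinom (l + INR (s + n) - 1) n)
       * (RtoC (falling (- k) n * invpow n (-4 * PI * v)) * Lf) * Y
     + RtoC ((-1) ^ s * gbinom (k + INR (s + n) - 1) s * gbinom (l + INR (s + n) - 1) n)
       * X * (RtoC (falling (- l) s * invpow s (-4 * PI * v)) * Lg))
  = RtoC (gbinom (l + INR (s + n) - 1) (s + n))
      * (RtoC (raise_coef k (s + n) n * (-4 * PI) ^ n * invpow s v) * X) * Lg
    + RtoC ((-1) ^ (s + n) * gbinom (k + INR (s + n) - 1) (s + n)) * Lf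
      * (RtoC (raise_coef l (s + n) s * (-4 * PI) ^ s * invpow n v) * Y).
Proof.
  rewrite <- RtoC_pow.
  transitivity (
    RtoC ((-1) ^ s * gbinom (k + INR (s + n) - 1) s * gbinom (l + INR (s + n) - 1) n
          * falling (- k) n * ((-4 * PI) ^ (s + n) * invpow n (-4 * PI * v))) * (Lf * Y)
  + RtoC ((-1) ^ s * gbinom (k + INR (s + n) - 1) s * gbinom (l + INR (s + n) - 1) n
          * falling (- l) s * ((-4 * PI) ^ (n + s) * invpow s (-4 * PI * v))) * (X * Lg)).
  - rewrite (Nat.add_comm n s), !RtoC_mult; ring.
  - rewrite bracket_coef_left, bracket_coef_right, !neg_4pi_pow_invpow, !RtoC_mult; ring.
Qed.

Close Scope C_scope.

Theorem proposition3p6 (G : mp2 -> Prop) (HG : congruence_subgroup_Mp2 G)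
  (k l : R) (f g : C -> C)
  (Hf : harmonic_Maass G k f) (Hg : harmonic_Maass G l g) :
  forall (j : nat) (tau : C), upper tau ->
    (Cpow (RtoC (- 4 * PI)) j * Lop (RCbracket k l j f g) tau)%C =
    (RtoC (gbinom (l + INR j - 1) j) * Rit k j f tau * Lop g tau
     + RtoC ((-1) ^ j * gbinom (k + INR j - 1) j) * Lop f tau * Rit l j g tau)%C.
Proof.
  intros j tau Ht.
  destruct Hf as [Sf [_ Hfharm]], Hg as [Sg [_ Hgharm]].
  unfold RCbracket;
    rewrite Lop_sum by auto using ex_partials_mult, ex_partials_const, ex_partials_dnorm.
  rewrite (Rit_expansion_dnorm k f Sf j tau Ht), (Rit_expansion_dnorm l g Sg j tau Ht).
  apply sum_n_eq_lin_rev; intros s Hs.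
  rewrite Lop_mult, Lop_scal, (Lop_dnorm_harmonic k), (Lop_dnorm_harmonic l);
    auto using ex_partials_mult, ex_partials_const, ex_partials_dnorm.
  destruct (Nat.le_exists_sub s j Hs) as [n [-> _]].
  rewrite Nat.add_comm; replace (s + n - s)%nat with n by lia.
  replace (s + n - n)%nat with s by lia.
  apply bracket_term.
Qed.
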